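(* Let $f\in\mathcal{F}_k$. Then the Lovász hinge $L^f$ embeds the loss $\ell_{\text{abs}}^f:\mathcal{V}\times\mathcal{Y}\to\mathbb{R}_+$ given by $\ell_{\text{abs}}^f(v,y)=f(\{i: v_iy_i<0\})+f(\{i:v_iy_i\le 0\})$; moreover $\ell_{\text{abs}}^f$ coincides with the restriction of $L^f$ to $\mathcal{V}\times\mathcal{Y}$.
   Context: $[k]=\{1,\dots,k\}$, $\mathcal{Y}=\{-1,1\}^k$, $\mathcal{V}=\{-1,0,1\}^k$, $\Delta_\mathcal{Y}$ the probability distributions on $\mathcal{Y}$. $u\odot u'$ is the entrywise product, $\mathbbm{1}$ the all-ones vector, $(x)_+$ the entrywise positive part. $\mathcal{F}_k$ is the class of set functions $f:2^{[k]}\to\mathbb{R}$ that are submodular ($f(S)+f(T)\ge f(S\cup T)+f(S\cap T)$), increasing ($f(S\cup T)\ge f(S)$ for disjoint $S,T$) and normalized ($f(\emptyset)=0$). The Lovász extension is $F(x)=\max_{\pi}\sum_{i=1}^k x_{\pi_i}(f(\{\pi_1,\dots,\pi_i\})-f(\{\pi_1,\dots,\pi_{i-1}\}))$ for $x\in\mathbb{R}^k_+$ (max over permutations of $[k]$), and the Lovász hinge is $L^f(u,y)=F((\mathbbm{1}-u\odot y)_+)$ for $u\in\mathbb{R}^k,y\in\mathcal{Y}$. For a loss $\ell$ and $p\in\Delta_\mathcal{Y}$, $\ell(r;p)=\sum_y p_y\ell(r,y)$. A set $\mathcal{S}\subseteq\mathcal{R}$ is representative for a loss $\ell:\mathcal{R}\times\mathcal{Y}\to\mathbb{R}_+$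 if $\arg\min_{r\in\mathcal{R}}\ell(r;p)\cap\mathcal{S}\neq\emptyset$ for all $p$. A loss $L:\mathbb{R}^d\times\mathcal{Y}\to\mathbb{R}_+$ embeds $\ell:\mathcal{R}\times\mathcal{Y}\to\mathbb{R}_+$ if there are a representative set $\mathcal{S}$ for $\ell$ and an injective $\varphi:\mathcal{S}\to\mathbb{R}^d$ such that (i) $L(\varphi(r),y)=\ell(r,y)$ for all $r\in\mathcal{S},y\in\mathcal{Y}$, and (ii) for all $p\in\Delta_\mathcal{Y}$ and $r\in\mathcal{S}$: $r\in\arg\min_{r'\in\mathcal{R}}\ell(r';p)\iff\varphi(r)\in\arg\min_{u\in\mathbb{R}^d}L(u;p)$. *)

From HB Require Import structures.
From mathcomp Require Import all_boot all_order all_algebra.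
From mathcomp Require Import fingroup perm.
From mathcomp Require Import reals.
Set Implicit Arguments. Unset Strict Implicit. Unset Printing Implicit Defensive.
Import Order.TTheory GRing.Theory Num.Theory.
Local Open Scope ring_scope.

Section Defs.
Variable R : realType.

(* Labels: Y = {-1,1}^k, encoded as boolean vectors; true ↦ 1, false ↦ -1. *)
Definition Ylab (k : nat) := {ffun 'I_k -> bool}.
Definition yv (k : nat) (y : Ylab k) (i : 'I_k) : R := if y i then 1 else -1.

Definition Vrep (k : nat) :=
  {v : 'I_k -> R | forall i, v i = -1 \/ v i = 0 \/ v i = 1}.

Definition submodular (k : nat) (f : {set 'I_k} -> R) :=
  forall S T : {set 'I_k}, f (S :|: T) + f (S :&: T) <= f S + f T.
Definition increasing_sf (k : nat) (f : {set 'I_k} -> R) :=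
  forall S T : {set 'I_k}, [disjoint S & T] -> f S <= f (S :|: T).
Definition normalized_sf (k : nat) (f : {set 'I_k} -> R) := f set0 = 0.
Definition in_Fk (k : nat) (f : {set 'I_k} -> R) :=
  [/\ submodular f, increasing_sf f & normalized_sf f].

Definition lovasz_term (k : nat) (f : {set 'I_k} -> R) (x : 'I_k -> R)
    (pi : {perm 'I_k}) : R :=
  \sum_(i : 'I_k)
     x (pi i) * (f [set pi j | j : 'I_k & (j <= i)%N]
                 - f [set pi j | j : 'I_k & (j < i)%N]).
Definition lovasz_ext (k : nat) (f : {set 'I_k} -> R) (x : 'I_k -> R) : R :=
  \big[Num.max/lovasz_term f x 1%g]_(pi : {perm 'I_k}) lovasz_term f x pi.

Definition lovasz_hinge (k : nat) (f : {set 'I_k} -> R) (u : 'I_k -> R)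
    (y : Ylab k) : R :=
  lovasz_ext f (fun i => Num.max 0 (1 - u i * yv y i)).

Definition ell_abs (k : nat) (f : {set 'I_k} -> R) (v : Vrep k) (y : Ylab k) : R :=
  f [set i | sval v i * yv y i < 0] + f [set i | sval v i * yv y i <= 0].

Definition is_distr (k : nat) (p : Ylab k -> R) :=
  (forall y, 0 <= p y) /\ \sum_(y : Ylab k) p y = 1.

Definition exp_loss (k : nat) (Rep : Type) (ell : Rep -> Ylab k -> R)
    (p : Ylab k -> R) (r : Rep) : R :=
  \sum_(y : Ylab k) p y * ell r y.

Definition is_argmin (k : nat) (Rep : Type) (ell : Rep -> Ylab k -> R)
    (p : Ylab k -> R) (r : Rep) :=
  forall r' : Rep, exp_loss ell p r <= exp_loss ell p r'.

Definition representative (k : nat) (Rep : Type) (ell : Rep -> Ylab k -> R)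
    (S : Rep -> Prop) :=
  forall p, is_distr p -> exists r, S r /\ is_argmin ell p r.

Definition embeds (k d : nat) (Rep : Type) (L : ('I_d -> R) -> Ylab k -> R)
    (ell : Rep -> Ylab k -> R) :=
  exists (S : Rep -> Prop) (phi : Rep -> ('I_d -> R)),
    [/\ representative ell S,
        (forall r1 r2, S r1 -> S r2 -> phi r1 = phi r2 -> r1 = r2),
        (forall r y, S r -> L (phi r) y = ell r y) &
        (forall p r, is_distr p -> S r ->
           (is_argmin ell p r <-> is_argmin L p (phi r)))].
End Defs.

From mathcomp Require Import all_boot all_order all_algebra.
From mathcomp Require Import fingroup perm.
From mathcomp Require Import reals.
From mathcomp Require Import lra.
From Stdlib Require Import ProofIrrelevance.
Set Implicit Arguments. Unset Strict Implicit. Unset Printing Implicit Defensive.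
Import Order.TTheory GRing.Theory Num.Theory.
Local Open Scope ring_scope.

(* On V the argument (1 - v * y)_+ of the Lovász extension takes values in {0,1,2} and is
   the sum of the indicators of the nested sets {v_i y_i <= 0} ⊇ {v_i y_i < 0}.  For submodular
   f the Lovász extension is a single greedy sum on all vectors sorted by a common permutation,
   hence additive on such vectors, so L^f and ℓ_abs^f agree on V.
   Clipping u to [-1,1]^k does not increase L^f because f is increasing.  A u in the cube is a
   convex combination of 0 and of its roundings sg(u_i) [c <= |u_i|] at the levels c = |u_i|,
   weighted by the gaps between consecutive levels; for each label y the vectors 1 - v * y of
   this combination are sorted by a common permutation, so L^f(., y) is affine along it and
   some rounding in V has expected loss at most that of u.  Hence the minimisers of ℓ_abs^f
   over V are exactly the points of V minimising L^f over R^k. *)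

Lemma sum_option (V : nmodType) (I : finType) (F : option I -> V) :
  \sum_o F o = F None + \sum_i F (Some i).
Proof.
rewrite (perm_big (None :: map Some (index_enum I))) ?big_cons ?big_map //.
apply: uniq_perm => /=; first exact: index_enum_uniq.
  by rewrite map_inj_uniq ?index_enum_uniq ?andbT //; [apply/mapP => -[] | exact: Some_inj].
by case=> [i|]; rewrite inE ?mem_map ?mem_index_enum //; exact: Some_inj.
Qed.

Lemma telescope_sum_ord (V : zmodType) n (u : 'I_n -> V) (h : nat -> V) :
  (forall m : 'I_n, u m = h m.+1 - h m) -> \sum_m u m = h n - h 0%N.
Proof.
move=> uh; rewrite (eq_bigr _ (fun m _ => uh m)).
by rewrite -(big_mkord xpredT (fun m => h m.+1 - h m)) telescope_sumr.
Qed.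

Lemma telescope_tail_ord (R : pzRingType) n (c : nat -> R) o : (o <= n)%N ->
  \sum_(m < n) (c m - c m.+1) * (o <= m)%:R = c o - c n.
Proof.
move=> le_on; rewrite (telescope_sum_ord (h := fun m => - c (maxn o m))).
  by rewrite maxn0 (maxn_idPr le_on) opprK addrC.
move=> m; case: (leqP o m) => [le_om | lt_mo].
  by rewrite mulr1 (maxn_idPr (leqW le_om)) opprK addrC.
by rewrite mulr0 (maxn_idPl lt_mo) subrr.
Qed.

Lemma convex_comb_ge_min (R : realDomainType) (I : finType) (w g : I -> R) :
  (forall o, 0 <= w o) -> \sum_o w o = 1 -> exists o, g o <= \sum_o w o * g o.
Proof.
move=> w_ge0 w_sum1; case: (pickP (fun _ : I => true)) => [o0 _ | noI]; last first.
  by move: w_sum1; rewrite big_pred0 // => /esym/eqP; rewrite oner_eq0.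
case: (@arg_minP _ _ _ o0 xpredT g isT) => o _ g_min.
exists o; rewrite -[g o]mul1r -w_sum1 mulr_suml.
by apply: ler_sum => o' _; apply: ler_wpM2l => //; exact: g_min.
Qed.

Section LovaszHinge.
Variables (R : realType) (k : nat) (f : {set 'I_k} -> R).
Hypothesis f0 : f set0 = 0.
Hypothesis f_submod : submodular f.
Hypothesis f_incr : increasing_sf f.
Implicit Types (pi : {perm 'I_k}) (x z : 'I_k -> R) (A B : {set 'I_k}).

Definition prefix pi n : {set 'I_k} := [set pi j | j : 'I_k & (j < n)%N].
Definition marginal pi (o : 'I_k) : R := f (prefix pi o.+1) - f (prefix pi o).
Definition indicator A i : R := (i \in A)%:R.
Definition nonincreasing_along pi x := forall i j : 'I_k, (i <= j)%N -> x (pi j) <= x (pi i).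
Definition pad0 x (m : nat) : R := if insub m is Some o then x o else 0.

Lemma lovasz_termE x pi : lovasz_term f x pi = \sum_o x (pi o) * marginal pi o.
Proof. by []. Qed.

Lemma eq_lovasz_term x z pi : x =1 z -> lovasz_term f x pi = lovasz_term f z pi.
Proof. by move=> xz; apply: eq_bigr => o _; rewrite xz. Qed.

Lemma eq_lovasz_ext x z : x =1 z -> lovasz_ext f x = lovasz_ext f z.
Proof.
move=> xz; rewrite /lovasz_ext (eq_lovasz_term _ xz).
by apply: eq_bigr => pi _; exact: eq_lovasz_term.
Qed.

Lemma lovasz_termD x z pi :
  lovasz_term f (fun i => x i + z i) pi = lovasz_term f x pi + lovasz_term f z pi.
Proof. by rewrite !lovasz_termE -big_split; apply: eq_bigr => o _; rewrite mulrDl. Qed.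

Lemma lovasz_term_sum (I : finType) (w : I -> R) (z : I -> 'I_k -> R) pi :
  lovasz_term f (fun i => \sum_m w m * z m i) pi = \sum_m w m * lovasz_term f (z m) pi.
Proof.
rewrite lovasz_termE; under eq_bigr do rewrite mulr_suml.
rewrite exchange_big; apply: eq_bigr => m _; rewrite lovasz_termE mulr_sumr.
by apply: eq_bigr => o _; rewrite mulrA.
Qed.

Lemma mem_prefix pi n i : (i \in prefix pi n) = ((pi^-1)%g i < n)%N.
Proof. by rewrite -{1}(permKV pi i) mem_imset ?inE //; exact: perm_inj. Qed.

Lemma prefix0 pi : prefix pi 0 = set0.
Proof. by apply/setP => i; rewrite mem_prefix inE. Qed.

Lemma prefixT pi : prefix pi k = [set: 'I_k].
Proof. by apply/setP => i; rewrite mem_prefix inE ltn_ord. Qed.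

Lemma prefix_minn pi n : prefix pi (minn k n) = prefix pi n.
Proof. by apply/setP => i; rewrite !mem_prefix leq_min ltn_ord. Qed.

Lemma prefixS pi (o : 'I_k) : prefix pi o.+1 = pi o |: prefix pi o.
Proof.
apply/setP => i; rewrite !inE !mem_prefix ltnS leq_eqVlt; congr orb.
by apply/eqP/eqP => [/val_inj <- | ->]; rewrite ?permKV ?permK.
Qed.

Lemma prefix_notin pi (o : 'I_k) : pi o \notin prefix pi o.
Proof. by rewrite mem_prefix permK ltnn. Qed.

Lemma indicator_prefix_marginal pi n (o : 'I_k) :
  indicator (prefix pi n) (pi o) * marginal pi o =
  f (prefix pi (minn o.+1 n)) - f (prefix pi (minn o n)).
Proof.
rewrite /indicator mem_prefix permK; case: (ltnP o n) => [lt_on | le_no].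
  by rewrite mul1r (minn_idPl lt_on).
by rewrite mul0r (minn_idPr (leqW le_no)) subrr.
Qed.

Lemma lovasz_term_prefix pi n :
  lovasz_term f (indicator (prefix pi n)) pi = f (prefix pi n).
Proof.
rewrite lovasz_termE (telescope_sum_ord (h := fun m => f (prefix pi (minn m n)))).
  by rewrite min0n prefix0 f0 subr0 prefix_minn.
exact: indicator_prefix_marginal.
Qed.

Lemma indicator_marginal_le A pi (o : 'I_k) :
  indicator A (pi o) * marginal pi o <=
  f (A :&: prefix pi o.+1) - f (A :&: prefix pi o).
Proof.
have notin_o := prefix_notin pi o; rewrite /indicator /marginal prefixS.
case: (boolP (pi o \in A)) => Ao; last first.
  rewrite mul0r; suff -> : A :&: (pi o |: prefix pi o) = A :&: prefix pi o by rewrite subrr.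
  by apply/setP => i; rewrite !inE; case: eqVneq => // ->; rewrite (negbTE Ao).
have := f_submod (prefix pi o) (A :&: (pi o |: prefix pi o)).
have -> : prefix pi o :|: A :&: (pi o |: prefix pi o) = pi o |: prefix pi o.
  apply/setP => i; rewrite !inE; case: eqVneq => [->|_] /=; rewrite ?Ao ?orbT //.
  by case: (i \in prefix pi o); rewrite ?andbF.
have -> : prefix pi o :&: (A :&: (pi o |: prefix pi o)) = A :&: prefix pi o.
  apply/setP => i; rewrite !inE; case: eqVneq => [->|_] /=; rewrite ?(negbTE notin_o) ?andbF //.
  by case: (i \in prefix pi o); rewrite ?andbF ?andbT.
rewrite mul1r; lra.
Qed.

Lemma lovasz_term_indicator_le A pi : lovasz_term f (indicator A) pi <= f A.
Proof.
rewrite lovasz_termE; apply: le_trans (ler_sum _ (fun o _ => indicator_marginal_le A pi o)) _.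
rewrite (telescope_sum_ord (h := fun m => f (A :&: prefix pi m))) //.
by rewrite prefix0 setI0 f0 subr0 prefixT setIT.
Qed.

Lemma pad0_ord x (o : 'I_k) : pad0 x o = x o.
Proof. by rewrite /pad0 valK. Qed.

Lemma pad0_out x m : (k <= m)%N -> pad0 x m = 0.
Proof. by move=> le_km; rewrite /pad0 insubN // -leqNgt. Qed.

Lemma pad0_nonincreasing pi x : (forall i, 0 <= x i) -> nonincreasing_along pi x ->
  forall m n, (m <= n)%N -> pad0 (x \o pi) n <= pad0 (x \o pi) m.
Proof.
move=> x_ge0 x_sorted m n le_mn; case: (ltnP n k) => [lt_nk | le_kn].
  have lt_mk := leq_ltn_trans le_mn lt_nk.
  by rewrite -[n]/(val (Ordinal lt_nk)) -[m]/(val (Ordinal lt_mk)) !pad0_ord; exact: x_sorted.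
by rewrite pad0_out // /pad0; case: insub => //= o; exact: x_ge0.
Qed.

Lemma layer_cake x pi i :
  x i = \sum_(m < k) (pad0 (x \o pi) m - pad0 (x \o pi) m.+1) * indicator (prefix pi m.+1) i.
Proof.
under eq_bigr do rewrite /indicator mem_prefix ltnS.
by rewrite telescope_tail_ord ?pad0_ord ?pad0_out ?subr0 /= ?permKV // ltnW.
Qed.

Lemma lovasz_ext_nonincreasing x pi : (forall i, 0 <= x i) -> nonincreasing_along pi x ->
  lovasz_ext f x = lovasz_term f x pi.
Proof.
move=> x_ge0 x_sorted; apply/eqP; rewrite eq_le le_bigmax andbT.
(* x is a nonnegative combination of indicators of prefixes of pi, on which the term at pi
   is exact and every other term is smaller. *)
suff le_pi pi' : lovasz_term f x pi' <= lovasz_term f x pi by apply: bigmax_le.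
rewrite !(eq_lovasz_term _ (layer_cake x pi)) !lovasz_term_sum.
apply: ler_sum => m _; rewrite lovasz_term_prefix; apply: ler_wpM2l.
  by rewrite subr_ge0; apply: pad0_nonincreasing.
exact: lovasz_term_indicator_le.
Qed.

Lemma exists_nonincreasing_perm x : exists pi, nonincreasing_along pi x.
Proof.
pose r := fun i j : 'I_k => x j <= x i.
have r_total : total r by move=> i j; rewrite /r le_total.
have r_trans : transitive r by move=> j i l; rewrite /r => ji lj; exact: le_trans lj ji.
pose s := sort r (enum 'I_k).
have size_s : size s = k by rewrite size_sort size_enum_ord.
have uniq_s : uniq s by rewrite sort_uniq enum_uniq.
pose g o := nth o s o.
have gE o a : g o = nth a s o by rewrite /g (set_nth_default a) // size_s.
have g_inj : injective g.
  by move=> a b; rewrite (gE a a) (gE b a) => /eqP; rewrite nth_uniq ?size_s // => /eqP/val_inj.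
exists (perm g_inj) => i j le_ij; rewrite !permE (gE i i) (gE j i).
have r_refl : reflexive r by move=> a; rewrite /r.
by apply: (sorted_leq_nth r_trans r_refl i (sort_sorted r_total _)); rewrite ?inE ?size_s.
Qed.

Lemma upper_level_prefix x pi t : nonincreasing_along pi x ->
  exists m, [set i | t <= x i] = prefix pi m.
Proof.
move=> x_sorted; pose S := [set o : 'I_k | t <= x (pi o)].
exists (\max_(o in S) (val o).+1).
suff levelE (o : 'I_k) : (t <= x (pi o)) = (o < \max_(o in S) (val o).+1)%N.
  by apply/setP => i; rewrite inE mem_prefix -levelE permKV.
apply/idP/idP => [t_le | lt_max].
  by apply: (@leq_bigmax_cond _ (fun o => o \in S) (fun o : 'I_k => (val o).+1)); rewrite inE.
apply/negPn/negP => t_gt; move: lt_max; rewrite ltnNge => /negP; apply.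
apply/bigmax_leqP => o'; rewrite inE => t_le; rewrite ltnNge; apply/negP => le_oo'.
by rewrite (le_trans t_le (x_sorted _ _ le_oo')) in t_gt.
Qed.

Lemma lovasz_ext_nested A B : B \subset A ->
  lovasz_ext f (fun i => indicator A i + indicator B i) = f A + f B.
Proof.
move=> BA; set x := fun i => _.
have [pi x_sorted] := exists_nonincreasing_perm x.
have x_ge0 i : 0 <= x i by rewrite addr_ge0 ?ler0n.
have levelA : A = [set i | 1 <= x i].
  apply/setP => i; rewrite inE /x /indicator.
  by case: (boolP (i \in B)) => [/(subsetP BA) -> | _]; case: (i \in A) => /=;
    first [apply/esym/idP; lra | apply/esym/negP => ?; lra].
have levelB : B = [set i | 2 <= x i].
  apply/setP => i; rewrite inE /x /indicator.
  by case: (boolP (i \in B)) => [/(subsetP BA) -> | _]; case: (i \in A) => /=;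
    first [apply/esym/idP; lra | apply/esym/negP => ?; lra].
have [mA eA] : exists m, A = prefix pi m by rewrite levelA; exact: upper_level_prefix.
have [mB eB] : exists m, B = prefix pi m by rewrite levelB; exact: upper_level_prefix.
rewrite (lovasz_ext_nonincreasing x_ge0 x_sorted) lovasz_termD.
by rewrite [in LHS]eA [in LHS]eB !lovasz_term_prefix -eA -eB.
Qed.

Lemma marginal_ge0 pi o : 0 <= marginal pi o.
Proof.
rewrite subr_ge0 prefixS setUC; apply: f_incr.
by rewrite disjoint_sym disjoints1 prefix_notin.
Qed.

Lemma ler_lovasz_ext x z : (forall i, x i <= z i) -> lovasz_ext f x <= lovasz_ext f z.
Proof.
move=> le_xz; suff le_pi pi : lovasz_term f x pi <= lovasz_ext f z by apply: bigmax_le.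
apply: le_trans (le_bigmax _ _ pi); rewrite !lovasz_termE.
by apply: ler_sum => o _; apply: ler_wpM2r; [exact: marginal_ge0 | exact: le_xz].
Qed.

Lemma yv_sign (y : Ylab k) i : yv R y i = 1 \/ yv R y i = -1.
Proof. by rewrite /yv; case: (y i); [left | right]. Qed.

Lemma ell_abs_hinge (v : Vrep R k) (y : Ylab k) : ell_abs f v y = lovasz_hinge f (sval v) y.
Proof.
set s := fun i => sval v i * yv R y i.
have s_val i : s i = -1 \/ s i = 0 \/ s i = 1.
  rewrite /s; case: (yv_sign y i) => ->; case: (svalP v i) => [->|[->|->]];
  rewrite ?mulr1 ?mulrN1 ?mul0r ?opprK ?oppr0; auto.
have hinge_nested i :
    Num.max 0 (1 - s i) = indicator [set i | s i <= 0] i + indicator [set i | s i < 0] i.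
  rewrite /indicator !inE; case: (s_val i) => [->|[->|->]];
    rewrite ?(lerN10, ltrN10, lexx, ltxx, ler10, ltr10) /= max_r; lra.
rewrite /lovasz_hinge (eq_lovasz_ext hinge_nested) lovasz_ext_nested; last first.
  by apply/subsetP => i; rewrite !inE; exact: ltW.
by rewrite addrC.
Qed.

Definition thresh (t s : R) : R := if t <= `|s| then Num.sg s else 0.

Lemma thresh_values t s : thresh t s = -1 \/ thresh t s = 0 \/ thresh t s = 1.
Proof.
rewrite /thresh; case: ifP => _; last by auto.
case: (ltrgt0P s) => [s_gt0 | s_lt0 | s0];
  [rewrite gtr0_sg | rewrite ltr0_sg | rewrite s0 sgr0]; auto.
Qed.

Lemma thresh_mul_sign t s e : e = 1 \/ e = -1 -> thresh t (s * e) = thresh t s * e.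
Proof.
case=> ->; first by rewrite !mulr1.
by rewrite !mulrN1 /thresh normrN sgrN; case: ifP; rewrite ?oppr0.
Qed.

Lemma thresh_homo t : {homo thresh t : a b / a <= b}.
Proof.
move=> a b le_ab; rewrite /thresh.
case: (ltrgt0P a) => ha;
  [rewrite (gtr0_sg ha) | rewrite (ltr0_sg ha) | rewrite ha sgr0];
(case: (ltrgt0P b) => hb;
  [rewrite (gtr0_sg hb) | rewrite (ltr0_sg hb) | rewrite hb sgr0]);
rewrite ?if_same; do ?[case: ifPn => [? | /negP ?]]; lra.
Qed.

Lemma sum_thresh u tau i : nonincreasing_along tau (fun j => `|u j|) ->
  let c := pad0 ((fun j => `|u j|) \o tau) in
  \sum_(m < k) (c m - c m.+1) * thresh (c m) (u i) = u i.
Proof.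
move=> tau_sorted c; set o := (tau^-1)%g i.
have c_homo : forall m n, (m <= n)%N -> c n <= c m.
  exact: pad0_nonincreasing (fun j => normr_ge0 (u j)) tau_sorted.
have c_o : c o = `|u i| by rewrite /c pad0_ord /= permKV.
have step (m : 'I_k) : (c m - c m.+1) * thresh (c m) (u i) =
    Num.sg (u i) * ((c m - c m.+1) * (o <= m)%:R).
  rewrite /thresh -c_o; case: (leqP o m) => [le_om | lt_mo].
    by rewrite c_homo // mulr1 mulrC.
  rewrite !mulr0; case: ifPn => [le_mo | _]; last by rewrite mulr0.
  have := c_homo _ _ lt_mo; have := c_homo _ _ (leqnSn m) => ? ?.
  by rewrite (_ : c m - c m.+1 = 0) ?mul0r //; lra.
rewrite (eq_bigr _ (fun m _ => step m)) -mulr_sumr telescope_tail_ord; last exact: ltnW.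
by rewrite c_o /c pad0_out // subr0 -numEsg.
Qed.

Lemma lovasz_hinge_comb (I : finType) (w : I -> R) (v : I -> 'I_k -> R) u (y : Ylab k) pi :
  (forall o, 0 <= w o) -> \sum_o w o = 1 -> (forall o i, `|v o i| <= 1) ->
  (forall i, u i = \sum_o w o * v o i) ->
  (forall o, nonincreasing_along pi (fun i => 1 - v o i * yv R y i)) ->
  lovasz_hinge f u y = \sum_o w o * lovasz_hinge f (v o) y.
Proof.
move=> w_ge0 w_sum1 v_le1 u_comb v_sorted.
set z := fun o i => 1 - v o i * yv R y i.
have z_ge0 o i : 0 <= z o i.
  rewrite subr_ge0; apply: le_trans (ler_norm _) _.
  by rewrite normrM; case: (yv_sign y i) => ->; rewrite ?normrN normr1 mulr1.
have sum_z i : \sum_o w o * z o i = 1 - u i * yv R y i.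
  rewrite /z; under eq_bigr do rewrite mulrBr mulr1 mulrA.
  by rewrite sumrB w_sum1 -mulr_suml -u_comb.
have sum_z_ge0 i : 0 <= \sum_o w o * z o i.
  by apply: sumr_ge0 => o _; exact: mulr_ge0.
have sum_z_sorted : nonincreasing_along pi (fun i => \sum_o w o * z o i).
  by move=> a b le_ab; apply: ler_sum => o _; apply: ler_wpM2l => //; exact: v_sorted.
have hinge_z o : lovasz_hinge f (v o) y = lovasz_ext f (z o).
  by apply: eq_lovasz_ext => i; rewrite max_r //; exact: z_ge0.
rewrite [LHS]/lovasz_hinge (eq_lovasz_ext (z := fun i => \sum_o w o * z o i)); last first.
  by move=> i; rewrite sum_z max_r // -sum_z.
rewrite (lovasz_ext_nonincreasing sum_z_ge0 sum_z_sorted) lovasz_term_sum.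
by apply: eq_bigr => o _; rewrite hinge_z (lovasz_ext_nonincreasing (z_ge0 o) (v_sorted o)).
Qed.

Lemma exp_loss_comb (Rep : Type) (ell : Rep -> Ylab k -> R) p (I : finType)
    (w : I -> R) (r : I -> Rep) r0 :
  (forall y, ell r0 y = \sum_o w o * ell (r o) y) ->
  exp_loss ell p r0 = \sum_o w o * exp_loss ell p (r o).
Proof.
move=> ell_comb; rewrite /exp_loss; under eq_bigr do rewrite ell_comb mulr_sumr.
rewrite exchange_big; apply: eq_bigr => o _; rewrite mulr_sumr.
by apply: eq_bigr => y _; rewrite mulrCA.
Qed.

Lemma exists_Vrep_le_cube p u : (forall i, `|u i| <= 1) ->
  exists v : Vrep R k, exp_loss (lovasz_hinge f) p (sval v) <= exp_loss (lovasz_hinge f) p u.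
Proof.
move=> u_le1; have [tau tau_sorted] := exists_nonincreasing_perm (fun j => `|u j|).
set c := pad0 ((fun j => `|u j|) \o tau).
have c_homo : forall m n, (m <= n)%N -> c n <= c m.
  exact: pad0_nonincreasing (fun j => normr_ge0 (u j)) tau_sorted.
(* u is the combination of its roundings at the levels c m, weighted by the gaps between
   consecutive levels, and of 0 with the remaining weight 1 - c 0. *)
pose w (o : option 'I_k) := if o is Some m then c m - c m.+1 else 1 - c 0%N.
pose v (o : option 'I_k) i := if o is Some m then thresh (c m) (u i) else 0.
have v_val o i : v o i = -1 \/ v o i = 0 \/ v o i = 1.
  by case: o => [m|]; [exact: thresh_values | right; left].
have w_ge0 o : 0 <= w o.
  case: o => [m|] /=; rewrite subr_ge0; first exact: c_homo.
  by rewrite /c /pad0; case: insub => //= m; exact: u_le1.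
have w_sum1 : \sum_o w o = 1.
  rewrite sum_option /= (telescope_sum_ord (h := fun m => - c m)) => [|m]; last first.
    by rewrite opprK addrC.
  by rewrite /c (pad0_out _ (leqnn k)); lra.
have u_comb i : u i = \sum_o w o * v o i.
  by rewrite sum_option /= mulr0 add0r sum_thresh.
have hinge_comb y : lovasz_hinge f u y = \sum_o w o * lovasz_hinge f (v o) y.
  have [pi pi_sorted] := exists_nonincreasing_perm (fun i => 1 - u i * yv R y i).
  apply: (lovasz_hinge_comb (pi := pi)) => // [o i | [m|] a b le_ab /=].
  - by case: (v_val o i) => [|[|]] ->; rewrite ?normrN ?normr1 ?normr0.
  - rewrite -(thresh_mul_sign _ _ (yv_sign y (pi a))) -(thresh_mul_sign _ _ (yv_sign y (pi b))).
    suff : thresh (c m) (u (pi a) * yv R y (pi a)) <= thresh (c m) (u (pi b) * yv R y (pi b)).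
      by move=> ?; lra.
    by apply: thresh_homo; have := pi_sorted a b le_ab; lra.
  - by rewrite !mul0r.
have [o le_o] := convex_comb_ge_min (fun o => exp_loss (lovasz_hinge f) p (v o)) w_ge0 w_sum1.
by exists (exist _ (v o) (v_val o)); rewrite (exp_loss_comb p hinge_comb).
Qed.

Lemma exists_Vrep_le p u : (forall y, 0 <= p y) ->
  exists v : Vrep R k, exp_loss (lovasz_hinge f) p (sval v) <= exp_loss (lovasz_hinge f) p u.
Proof.
move=> p_ge0; pose u' i := if u i < -1 then -1 else if 1 < u i then 1 else u i.
have u'_le1 i : `|u' i| <= 1.
  by rewrite ler_norml /u'; case: (ltrP (u i) (-1)) => ?; case: (ltrP 1 (u i)) => ?; lra.
have [v le_v] := exists_Vrep_le_cube p u'_le1.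
exists v; apply: le_trans le_v _; apply: ler_sum => y _; apply: ler_wpM2l => //.
apply: ler_lovasz_ext => i; rewrite /u'.
case: (yv_sign y i) => ->; case: (ltrP (u i) (-1)) => ?; case: (ltrP 1 (u i)) => ?;
  rewrite ge_max !le_max lexx /=; apply/orP; first [left; lra | right; lra].
Qed.

Fact Vrep_of_sets_subproof (N Z : {set 'I_k}) i :
  let v := (if i \in N then -1 else if i \in Z then 0 else 1) : R in
  v = -1 \/ v = 0 \/ v = 1.
Proof. by case: ifP => _; [|case: ifP => _]; auto. Qed.

Definition Vrep_of_sets (N Z : {set 'I_k}) : Vrep R k :=
  exist _ _ (Vrep_of_sets_subproof N Z).

Lemma Vrep_inj : injective (@sval _ _ : Vrep R k -> 'I_k -> R).
Proof. by move=> [v1 h1] [v2 h2] /= e; subst v2; rewrite (proof_irrelevance _ h1 h2). Qed.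

Lemma eq_ell_abs (v w : Vrep R k) y : sval v =1 sval w -> ell_abs f v y = ell_abs f w y.
Proof. by move=> vw; rewrite /ell_abs; congr (f _ + f _); apply/setP => i; rewrite !inE vw. Qed.

Lemma exists_argmin_ell_abs p : exists r, is_argmin (ell_abs f) p r.
Proof.
pose H P := exp_loss (ell_abs f) p (Vrep_of_sets P.1 P.2).
case: (@arg_minP _ _ _ (set0, set0) xpredT H isT) => P _ P_min.
exists (Vrep_of_sets P.1 P.2) => r.
suff -> : exp_loss (ell_abs f) p r = H ([set i | sval r i == -1], [set i | sval r i == 0]).
  exact: P_min.
apply: eq_bigr => y _; congr (_ * _); apply: eq_ell_abs => i /=; rewrite !inE.
by case: (svalP r i) => [|[|]] ->; rewrite ?eqxx //; do ?[case: eqP => ?]; lra.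
Qed.

Lemma exp_loss_hinge_Vrep p (v : Vrep R k) :
  exp_loss (lovasz_hinge f) p (sval v) = exp_loss (ell_abs f) p v.
Proof. by apply: eq_bigr => y _; rewrite ell_abs_hinge. Qed.

Lemma is_argmin_hinge_Vrep p (r : Vrep R k) : (forall y, 0 <= p y) ->
  is_argmin (ell_abs f) p r <-> is_argmin (lovasz_hinge f) p (sval r).
Proof.
move=> p_ge0; split=> [r_min u | r_min r'].
  have [v le_v] := exists_Vrep_le u p_ge0.
  by apply: le_trans le_v; rewrite !exp_loss_hinge_Vrep.
by rewrite -!exp_loss_hinge_Vrep.
Qed.

End LovaszHinge.

Theorem theorem2 (R : realType) (k : nat) (f : {set 'I_k} -> R) :
  in_Fk f ->
  embeds (@lovasz_hinge R k f) (@ell_abs R k f) /\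
  (forall (v : Vrep R k) (y : Ylab k), ell_abs f v y = lovasz_hinge f (sval v) y).
Proof.
case=> f_submod f_incr f0.
split; last by move=> v y; exact: ell_abs_hinge.
exists (fun _ => True), sval; split.
- by move=> p _; have [r r_min] := exists_argmin_ell_abs f p; exists r.
- by move=> r1 r2 _ _; exact: Vrep_inj.
- by move=> r y _; rewrite ell_abs_hinge.
- by move=> p r [p_ge0 _] _; exact: is_argmin_hinge_Vrep.
Qed.
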